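(* Let $G=(V,E)$ be a finite graph with vertices $V=\{v_1,\dots,v_n\}$ (loops and parallel edges allowed), and fix an orientation $\mathcal{O}$ of $G$. Then the number of distinct score vectors of orientations of $G$ equals the number of distinct score vectors of spanning subdigraphs of $G_{\mathcal{O}}$.
   Context: An orientation $\mathcal{O}$ of $G$ assigns to each edge with endpoints $v,w$ one of the ordered pairs $(v,w)$ or $(w,v)$ (a loop at $v$ gets $(v,v)$), giving the directed graph $G_{\mathcal{O}}$ on $V$. A spanning subdigraph of $G_{\mathcal{O}}$ is $(V,\{\mathcal{O}(e):e\in F\})$ for some $F\subseteq E$. For a directed graph $D$ on $V$, the score vector is $s_D=(s_D(v_1),\dots,s_D(v_n))$ with $s_D(v_i)=\deg^+_D(v_i)-\deg^-_D(v_i)$, where $\deg^+_D(v_i)$ (resp. $\deg^-_D(v_i)$) is the number of arcs with tail (resp. head) $v_i$. *)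

From mathcomp Require Import all_boot all_order all_algebra.
Set Implicit Arguments. Unset Strict Implicit. Unset Printing Implicit Defensive.
Import GRing.Theory Num.Theory.

(* A finite graph G = (V, E) with loops and parallel edges: edges form a finite
   type E, and [ends e] lists the two endpoints of e (in an arbitrary reference
   order; a loop at v has ends e = (v, v)). *)

Definition is_orientation (V E : finType) (ends : E -> V * V)
  (o : {ffun E -> V * V}) : bool :=
  [forall e, (o e == ends e) || (o e == ((ends e).2, (ends e).1))].

(* Score vector of the spanning subdigraph (V, {o e : e in F}) of the
   directed graph given by o: s(v) = outdeg(v) - indeg(v). *)
Definition score (V E : finType) (o : {ffun E -> V * V}) (F : {set E})
  : {ffun V -> int} :=
  [ffun v => (#|[set e in F | (o e).1 == v]|%:Z
              - #|[set e in F | (o e).2 == v]|%:Z)%R].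

Definition n_orientation_scores (V E : finType) (ends : E -> V * V) : nat :=
  size (undup [seq score o setT
               | o <- enum [pred o : {ffun E -> V * V} | is_orientation ends o]]).

Definition n_subdigraph_scores (V E : finType) (O : {ffun E -> V * V}) : nat :=
  size (undup [seq score O F | F <- enum {set E}]).

From mathcomp Require Import all_boot all_order all_algebra.
Import GRing.Theory Num.Theory.
Set Implicit Arguments. Unset Strict Implicit. Unset Printing Implicit Defensive.

(* Reversing the arcs of a set F of edges of G_O changes the score vector of
   G_O from s to s - 2 s_F, where s_F is the score vector of the spanning
   subdigraph with arc set F.  Every orientation of G arises from O by
   reversing exactly one set F, namely the edges on which it disagrees with O,
   so the orientation score vectors are the image of the subdigraph score
   vectors under the injective map x |-> s - 2 x. *)

Local Open Scope ring_scope.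

Lemma card_set_in_sum (T : finType) (A : {pred T}) (P : pred T) :
  #|[set x in A | P x]| = (\sum_(x in A) P x)%N.
Proof.
rewrite -sum1_card (eq_bigl (fun x => (x \in A) && P x)) => [|x]; last by rewrite inE.
by rewrite big_mkcondr /=; apply: eq_bigr => x _; case: (P x).
Qed.

Lemma subr_mulrn2_inj (aT : finType) (R : numDomainType) (s : {ffun aT -> R}) :
  injective (fun x : {ffun aT -> R} => s - x *+ 2).
Proof.
move=> x y /addrI /oppr_inj eq_x2_y2; apply/ffunP => a.
by apply/eqP; move/ffunP/(_ a)/eqP: eq_x2_y2; rewrite !ffunMnE eqrMn2r.
Qed.

Section Reorientation.
Variables (V E : finType).
Implicit Types (a : V * V) (o O : {ffun E -> V * V}) (F : {set E}).

Definition arc_rev a : V * V := (a.2, a.1).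

Definition arc_score a (v : V) : int := (a.1 == v)%:R - (a.2 == v)%:R.

Lemma arc_score_rev a v : arc_score (arc_rev a) v = - arc_score a v.
Proof. by rewrite /arc_score opprB. Qed.

Lemma scoreE o F v : score o F v = \sum_(e in F) arc_score (o e) v.
Proof.
rewrite ffunE !card_set_in_sum -!natz !natr_sum -sumrB.
by apply: eq_bigr => e _.
Qed.

Definition reorient O F : {ffun E -> V * V} :=
  [ffun e => if e \in F then arc_rev (O e) else O e].

Lemma score_reorient O F :
  score (reorient O F) setT = score O setT - score O F *+ 2.
Proof.
apply/ffunP => v; rewrite [RHS]ffunE [X in _ + X]ffunE ffunMnE !scoreE.
rewrite !(eq_bigl (fun e => true) _ (fun e => in_setT e)).
rewrite !(bigID (mem F) predT) /=.
rewrite (eq_bigr (fun e => - arc_score (O e) v)); last first.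
  by move=> e eF; rewrite ffunE eF arc_score_rev.
rewrite [X in _ + X = _](eq_bigr (fun e => arc_score (O e) v)); last first.
  by move=> e /negbTE eNF; rewrite ffunE eNF.
by rewrite sumrN mulr2n opprD addrAC addrA subrr add0r.
Qed.

Variable ends : E -> V * V.

Lemma reorient_orientation O F :
  is_orientation ends O -> is_orientation ends (reorient O F).
Proof.
move=> /forallP orientO; apply/forallP => e; rewrite ffunE.
case: (e \in F) => //; rewrite /arc_rev.
case/orP: (orientO e) => /eqP -> /=; apply/orP; [right | left] => //.
by rewrite -surjective_pairing.
Qed.

(* Two orientations of the same edge either agree or are reverse to each other. *)
Lemma reorient_disagreement O o :
  is_orientation ends O -> is_orientation ends o ->
  reorient O [set e | o e != O e] = o.
Proof.
move=> /forallP orientO /forallP orient_o; apply/ffunP => e; rewrite !ffunE inE.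
case: eqP => [-> //|neq_oO] /=; rewrite /arc_rev.
case/orP: (orientO e) => /eqP eqO; case/orP: (orient_o e) => /eqP eq_o;
  rewrite eqO eq_o /= -?surjective_pairing //;
  by rewrite eqO eq_o -?surjective_pairing in neq_oO.
Qed.

End Reorientation.

Theorem lemma2p14 (V E : finType) (ends : E -> V * V) (O : {ffun E -> V * V}) :
  is_orientation ends O ->
  n_orientation_scores ends = n_subdigraph_scores O.
Proof.
move=> orientO; rewrite /n_orientation_scores /n_subdigraph_scores.
rewrite -[RHS](size_map (fun x => score O setT - x *+ 2)).
rewrite -undup_map_inj; last exact: subr_mulrn2_inj.
apply/perm_size/perm_undup => s; rewrite -map_comp.
apply/mapP/mapP => [[o] | [F _ ->]].
- rewrite mem_enum => orient_o ->.
  exists [set e | o e != O e]; first by rewrite mem_enum.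
  by rewrite /= -score_reorient (reorient_disagreement orientO orient_o).
- exists (reorient O F); last by rewrite score_reorient.
  by rewrite mem_enum; exact: reorient_orientation.
Qed.
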